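(* Assume $r\neq0$ and $r+s=0$. For $0\le j\le d$ let $\bar\theta_j=(d-2j)(d-2j+1)$. Then for all $0\le i,j\le d$, $$u_i(\bar\theta_j)={}_4F_3\left(\genfrac..{0pt}{}{-i,\ i-d+r,\ -j,\ j-d-\frac12}{-d,\ \frac{r-d}{2},\ \frac{r-d+1}{2}}\,\middle|\,1\right).$$
   Context: Fix an integer $d\ge0$ and $r,s\in(-1,\infty)$. Write $(x)_i=x(x+1)\cdots(x+i-1)$, $(x)_0=1$, and ${}_mF_n\left(\genfrac..{0pt}{}{a_1,\dots,a_m}{b_1,\dots,b_n}\,\middle|\,1\right)=\sum_{k\ge0}\frac{(a_1)_k\cdots(a_m)_k}{(b_1)_k\cdots(b_n)_k\,k!}$ (terminating sums here). For $0\le i\le d$ put $\theta_i=(d-i)(d-i+r+s+1)$ (these are distinct). Let $u_0,\dots,u_d$ be the unique real polynomials of degree at most $d$ such that $u_i(\theta_j)={}_3F_2\left(\genfrac..{0pt}{}{-i,-j,j-r-s-2d-1}{-s-d,-d}\,\middle|\,1\right)$ for all $0\le i,j\le d$ (the dual Hahn polynomials). *)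

From HB Require Import structures.
From mathcomp Require Import all_boot all_order all_algebra.
Set Implicit Arguments. Unset Strict Implicit. Unset Printing Implicit Defensive.
Import Order.TTheory GRing.Theory Num.Theory.
Local Open Scope ring_scope.

Definition poch (R : fieldType) (x : R) (k : nat) : R :=
  \prod_(m < k) (x + m%:R).

(* When some numerator parameter equals -n with n <= N (as in all uses below),
   all terms with k > n vanish, so this is exactly the terminating series. *)
Definition hyp (R : fieldType) (N : nat) (as_ bs : seq R) : R :=
  \sum_(k < N.+1)
     (\prod_(a <- as_) poch a k) / ((\prod_(b <- bs) poch b k) * k`!%:R).

Definition theta (R : fieldType) (d : nat) (r s : R) (i : nat) : R :=
  (d%:R - i%:R) * (d%:R - i%:R + r + s + 1).

Definition thetabar (R : fieldType) (d : nat) (j : nat) : R :=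
  (d%:R - 2 * j%:R) * (d%:R - 2 * j%:R + 1).

Definition dualHahn3F2 (R : fieldType) (d : nat) (r s : R) (i j : nat) : R :=
  hyp d [:: - i%:R; - j%:R; j%:R - r - s - 2 * d%:R - 1] [:: - s - d%:R; - d%:R].

Definition target4F3 (R : fieldType) (d : nat) (r : R) (i j : nat) : R :=
  hyp d [:: - i%:R; i%:R - d%:R + r; - j%:R; j%:R - d%:R - 2^-1]
        [:: - d%:R; (r - d%:R) / 2; (r - d%:R + 1) / 2].

From HB Require Import structures.
From mathcomp Require Import all_boot all_order all_algebra.
From mathcomp Require Import ring lra zify.
Set Implicit Arguments.
Unset Strict Implicit.
Unset Printing Implicit Defensive.

Import Order.TTheory GRing.Theory Num.Theory.
Local Open Scope ring_scope.

(* With s = -r we have thetabar_j = theta_k for k = 2j (if 2j <= d) or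
   k = 2d+1-2j, so the claim is an identity between a 3F2 and a 4F3 in the
   variable x = i.  Both F(x) = 3F2(-x, -k, k-2d-1; r-d, -d) and
   G(x) = 4F3(-x, x+r-d, -j, j-d-1/2; -d, (r-d)/2, (r-d+1)/2) are eigenfunctions,
   with the same eigenvalue, of the Hahn difference operator
     L f(x) = (x-d)(x+r-d)(f(x+1) - f(x)) + x(x+r)(f(x-1) - f(x)):
   L is triangular on the bases (-x)_n and (-x)_n (x+r-d)_n, and the resulting
   two-term recurrences for the coefficients are exactly the ratios of the
   hypergeometric terms.  As r is not an integer, (x-d)(x+r-d) does not vanish
   for x = 0, ..., d-1, so the eigen-equation determines f(1), ..., f(d) from
   f(0), and F(0) = G(0) = 1. *)

Section Pochhammer.
Variable R : numFieldType.
Implicit Types (x : R) (xs ys : seq R).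

Lemma poch0 x : poch x 0 = 1.
Proof. by rewrite /poch big_ord0. Qed.

Lemma pochS x n : poch x n.+1 = poch x n * (x + n%:R).
Proof. by rewrite /poch big_ord_recr. Qed.

Lemma pochSl x n : poch x n.+1 = x * poch (x + 1) n.
Proof.
rewrite /poch big_ord_recl /= addr0; congr (_ * _); apply: eq_bigr => i _.
by rewrite /bump /= add1n -natr1 addrA addrAC.
Qed.

Lemma poch_eq0 (k n : nat) : (k < n)%N -> poch (- k%:R : R) n = 0.
Proof. by move=> lt_kn; rewrite /poch (bigD1 (Ordinal lt_kn)) //= addNr mul0r. Qed.

Lemma poch_neq0 x n : (forall m, (m < n)%N -> x + m%:R != 0) -> poch x n != 0.
Proof. by move=> neq0; apply/prodf_neq0 => m _; exact: neq0. Qed.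

Lemma pochS2_sub1 x p : poch (x - 1) p.+2 = (x - 1) * x * poch (x + 1) p.
Proof. by rewrite !pochSl subrK mulrA. Qed.

Lemma pochS2 x p : poch x p.+2 = x * poch (x + 1) p * (x + 1 + p%:R).
Proof. by rewrite pochSl pochS mulrA. Qed.

Lemma pochS2_add1 x p :
  poch (x + 1) p.+2 = poch (x + 1) p * (x + 1 + p%:R) * (x + 1 + p.+1%:R).
Proof. by rewrite !pochS. Qed.

Definition hypterm xs ys (n : nat) : R :=
  (\prod_(a <- xs) poch a n) / ((\prod_(b <- ys) poch b n) * n`!%:R).

Lemma hypterm0 xs ys : hypterm xs ys 0 = 1.
Proof.
by rewrite /hypterm !big1 ?mul1r ?invr1 // => a _; rewrite poch0.
Qed.

Lemma hypterm_cons a xs ys n : hypterm (a :: xs) ys n = poch a n * hypterm xs ys n.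
Proof. by rewrite /hypterm big_cons mulrA. Qed.

Lemma hypterm_eq0 xs ys n : \prod_(a <- xs) poch a n = 0 -> hypterm xs ys n = 0.
Proof. by rewrite /hypterm => ->; rewrite mul0r. Qed.

Lemma prod_pochS (s : seq R) n :
  \prod_(a <- s) poch a n.+1 = \prod_(a <- s) poch a n * \prod_(a <- s) (a + n%:R).
Proof. by rewrite -big_split; apply: eq_bigr => a _; rewrite pochS. Qed.

(* The first alternative covers the last term of a terminating series, where a
   denominator may vanish (and x / 0 = 0) but so does the numerator. *)
Lemma hypterm_recr xs ys n :
    \prod_(a <- xs) poch a n.+1 = 0 \/ \prod_(b <- ys) poch b n.+1 != 0 ->
  \prod_(a <- xs) (a + n%:R) * hypterm xs ys n
    = \prod_(b <- ys) (b + n%:R) * n.+1%:R * hypterm xs ys n.+1.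
Proof.
have fact_neq0 m : m`!%:R != 0 :> R by rewrite pnatr_eq0 -lt0n fact_gt0.
rewrite /hypterm !prod_pochS factS natrM.
case=> [/eqP | ].
  by rewrite mulf_eq0 => /orP[] /eqP ->; rewrite !(mul0r, mulr0).
rewrite mulf_eq0 negb_or => /andP[Pb_neq0 Q_neq0].
by field; rewrite fact_neq0 nat1r pnatr_eq0 Q_neq0 Pb_neq0.
Qed.

Lemma hyp_cons N a xs ys :
  hyp N (a :: xs) ys = \sum_(n < N.+1) poch a n * hypterm xs ys n.
Proof. by apply: eq_bigr => n _; rewrite -hypterm_cons. Qed.

Lemma hyp_cons0 N xs ys : hyp N (0 :: xs) ys = 1.
Proof.
rewrite hyp_cons big_ord_recl poch0 hypterm0 mul1r big1 ?addr0 // => n _.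
by rewrite pochSl !mul0r.
Qed.

End Pochhammer.

Section HahnOperator.
Variables (R : numFieldType) (a b : R).

Definition hahn_op (f : R -> R) (x : R) : R :=
  (x + a) * (x + b) * (f (x + 1) - f x) + x * (x + b - a) * (f (x - 1) - f x).

Definition hahn_eig (n : nat) : R := n%:R * (n%:R + 2 * a - 1).

Lemma eq_hahn_op f g : f =1 g -> hahn_op f =1 hahn_op g.
Proof. by move=> fg x; rewrite /hahn_op !fg. Qed.

Lemma hahn_op_sum N (phi : R -> nat -> R) (c : nat -> R) x :
  hahn_op (fun y => \sum_(n < N) phi y n * c n) x
    = \sum_(n < N) hahn_op (phi^~ n) x * c n.
Proof.
rewrite /hahn_op -!sumrB !mulr_sumr -big_split; apply: eq_bigr => n _ /=; ring.
Qed.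

Lemma hahn_op_poch n x :
  hahn_op (fun y => poch (- y) n) x
    = hahn_eig n * poch (- x) n
      - n%:R * (n%:R - 1 + a) * (n%:R - 1 + b) * poch (- x) n.-1.
Proof.
rewrite /hahn_op /hahn_eig.
case: n => [|[|p]]; rewrite /= ?poch0; first ring.
  by rewrite !pochS !poch0; ring.
rewrite (_ : - (x + 1) = - x - 1); last ring.
rewrite (_ : - (x - 1) = - x + 1); last ring.
rewrite pochS2_sub1 pochS2_add1 pochS2 pochSl; ring.
Qed.

Lemma hahn_op_poch2 n x :
  hahn_op (fun y => poch (- y) n * poch (y + b) n) x
    = hahn_eig (2 * n)%N * (poch (- x) n * poch (x + b) n)
      - n%:R * (n%:R - 1 + a) * (2 * n%:R - 2 + b) * (2 * n%:R - 1 + b)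
        * (poch (- x) n.-1 * poch (x + b) n.-1).
Proof.
rewrite /hahn_op /hahn_eig natrM.
case: n => [|[|p]]; rewrite /= ?poch0; first ring.
  by rewrite !pochS !poch0; ring.
rewrite (_ : - (x + 1) = - x - 1); last ring.
rewrite (_ : - (x - 1) = - x + 1); last ring.
rewrite (_ : x + 1 + b = (x + b) + 1); last ring.
rewrite (_ : x - 1 + b = (x + b) - 1); last ring.
rewrite !pochS2_sub1 !pochS2_add1 !pochS2 !pochSl; ring.
Qed.

Lemma hahn_op_series N (phi : R -> nat -> R) (c mu nu : nat -> R) lam :
    (forall n x, hahn_op (phi^~ n) x = mu n * phi x n + nu n * phi x n.-1) ->
    nu 0%N = 0 -> c N.+1 = 0 ->
    (forall n, (n <= N)%N -> (mu n - lam) * c n + nu n.+1 * c n.+1 = 0) ->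
  forall x, hahn_op (fun y => \sum_(n < N.+1) phi y n * c n) x
              = lam * \sum_(n < N.+1) phi x n * c n.
Proof.
move=> phi_eig nu0 cN1 c_rec x; apply/eqP; rewrite -subr_eq0 mulr_sumr.
rewrite hahn_op_sum -sumrB; under eq_bigr => n _ do rewrite phi_eig.
have shift : \sum_(n < N.+1) nu n * phi x n.-1 * c n
           = \sum_(n < N.+1) nu n.+1 * phi x n * c n.+1.
  rewrite big_ord_recl nu0 !mul0r add0r big_ord_recr /= cN1 mulr0 addr0.
  exact: eq_bigr.
rewrite (_ : \sum_(n < N.+1) _ = \sum_(n < N.+1) (mu n - lam) * c n * phi x n
                               + \sum_(n < N.+1) nu n * phi x n.-1 * c n).
  rewrite shift -big_split /= big1 // => n _.
  by rewrite [_ * c n.+1]mulrAC -mulrDl c_rec ?mul0r // -ltnS.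
by rewrite -big_split; apply: eq_bigr => n _ /=; ring.
Qed.

Lemma hahn_op_eigen_uniq N lam (F G : R -> R) :
    (forall m, (m < N)%N -> (a + m%:R) * (b + m%:R) != 0) ->
    (forall m, (m < N)%N -> hahn_op F m%:R = lam * F m%:R) ->
    (forall m, (m < N)%N -> hahn_op G m%:R = lam * G m%:R) ->
    F 0 = G 0 ->
  forall m, (m <= N)%N -> F m%:R = G m%:R.
Proof.
move=> A_neq0 F_eig G_eig FG0.
pose H x := F x - G x.
have H_eig m : (m < N)%N -> hahn_op H m%:R = lam * H m%:R.
  move=> lt_mN; rewrite /H mulrBr -F_eig // -G_eig //; rewrite /hahn_op; ring.
(* The second conjunct starts the recurrence at m = 0, where the unconstrained
   value H (-1) is multiplied by 0. *)
suff H0 m : (m <= N)%N -> H m%:R = 0 /\ m%:R * (m%:R + b - a) * H (m%:R - 1) = 0.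
  by move=> m /H0[/eqP]; rewrite subr_eq0 => /eqP.
elim: m => [|m IHm] le_mN.
  by split; [rewrite /H FG0 subrr | rewrite !mul0r].
have [Hm Cm] := IHm (ltnW le_mN).
have: (a + m%:R) * (b + m%:R) * H (m%:R + 1)
      = hahn_op H m%:R - m%:R * (m%:R + b - a) * H (m%:R - 1).
  by rewrite /hahn_op Hm; ring.
rewrite H_eig // Hm mulr0 Cm subrr natr1 => /eqP.
rewrite mulf_eq0 (negPf (A_neq0 m le_mN)) /= => /eqP Hm1.
by split=> //; rewrite -natr1 addrK Hm mulr0.
Qed.

Lemma hahn_op_hyp3F2 N k :
    (k <= N)%N ->
    (forall m, (m < k)%N -> a + m%:R != 0) ->
    (forall m, (m < k)%N -> b + m%:R != 0) ->
  forall x,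
    hahn_op (fun y => hyp N [:: - y; - k%:R; k%:R + 2 * a - 1] [:: b; a]) x
      = hahn_eig k * hyp N [:: - x; - k%:R; k%:R + 2 * a - 1] [:: b; a].
Proof.
move=> le_kN a_neq0 b_neq0 x.
rewrite (eq_hahn_op (fun y => hyp_cons N (- y) _ _)) hyp_cons.
apply: (hahn_op_series (phi := fun y n => poch (- y) n) (mu := hahn_eig)
          (nu := fun n => - (n%:R * (n%:R - 1 + a) * (n%:R - 1 + b)))).
- by move=> n y; rewrite hahn_op_poch mulNr.
- by rewrite mulr0n !mul0r oppr0.
- by apply: hypterm_eq0; rewrite big_cons poch_eq0 ?mul0r.
move=> n le_nN.
have -> : hahn_eig n - hahn_eig k
          = \prod_(z <- [:: - k%:R; k%:R + 2 * a - 1]) (z + n%:R).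
  by rewrite !big_cons big_nil /hahn_eig; ring.
have -> : - (n.+1%:R * (n.+1%:R - 1 + a) * (n.+1%:R - 1 + b))
          = - (\prod_(z <- [:: b; a]) (z + n%:R) * n.+1%:R).
  by rewrite !big_cons big_nil -natr1; ring.
rewrite hypterm_recr ?mulNr ?subrr //.
have [le_kn | lt_nk] := leqP k n; [left | right].
  by rewrite big_cons poch_eq0 ?mul0r.
rewrite !big_cons big_nil mulr1 mulf_neq0 // poch_neq0 // => m lt_mn.
  by apply: b_neq0; lia.
by apply: a_neq0; lia.
Qed.

Lemma hahn_op_hyp4F3 N j :
    (j <= N)%N ->
    (forall m, (m < j)%N -> a + m%:R != 0) ->
    (forall m, (m < 2 * j)%N -> b + m%:R != 0) ->
  forall x,
    hahn_op (fun y => hyp N [:: - y; y + b; - j%:R; j%:R + a - 2^-1]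
                            [:: a; b / 2; (b + 1) / 2]) x
      = hahn_eig (2 * j)%N
        * hyp N [:: - x; x + b; - j%:R; j%:R + a - 2^-1] [:: a; b / 2; (b + 1) / 2].
Proof.
move=> le_jN a_neq0 b_neq0 x.
have two_neq0 : (2 : R) != 0 by rewrite pnatr_eq0.
have hyp_cons2 y : hyp N [:: - y; y + b; - j%:R; j%:R + a - 2^-1]
                            [:: a; b / 2; (b + 1) / 2]
  = \sum_(n < N.+1) poch (- y) n * poch (y + b) n
       * hypterm [:: - j%:R; j%:R + a - 2^-1] [:: a; b / 2; (b + 1) / 2] n.
  by rewrite hyp_cons; apply: eq_bigr => n _; rewrite hypterm_cons mulrA.
rewrite (eq_hahn_op hyp_cons2) hyp_cons2.
apply: (hahn_op_series (phi := fun y n => poch (- y) n * poch (y + b) n)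
  (mu := fun n => hahn_eig (2 * n)%N)
  (nu := fun n => - (n%:R * (n%:R - 1 + a) * (2 * n%:R - 2 + b) * (2 * n%:R - 1 + b)))).
- by move=> n y; rewrite hahn_op_poch2 mulNr.
- by rewrite mulr0n !mul0r oppr0.
- by apply: hypterm_eq0; rewrite big_cons poch_eq0 ?mul0r.
move=> n le_nN.
have -> : hahn_eig (2 * n)%N - hahn_eig (2 * j)%N
          = 4 * \prod_(z <- [:: - j%:R; j%:R + a - 2^-1]) (z + n%:R).
  by rewrite !big_cons big_nil /hahn_eig !natrM; field.
have -> : - (n.+1%:R * (n.+1%:R - 1 + a) * (2 * n.+1%:R - 2 + b) * (2 * n.+1%:R - 1 + b))
          = - (4 * (\prod_(z <- [:: a; b / 2; (b + 1) / 2]) (z + n%:R) * n.+1%:R)).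
  by rewrite !big_cons big_nil -natr1; field.
rewrite -mulrA hypterm_recr; first by ring.
have [le_jn | lt_nj] := leqP j n; [left | right].
  by rewrite big_cons poch_eq0 ?mul0r.
rewrite !big_cons big_nil mulr1 !mulf_neq0 // poch_neq0 // => m lt_mn.
- by apply: a_neq0; lia.
- rewrite (_ : b / 2 + m%:R = (b + (2 * m)%N%:R) / 2); last by rewrite natrM; field.
  by rewrite mulf_neq0 ?invr_neq0 // b_neq0 //; lia.
rewrite (_ : (b + 1) / 2 + m%:R = (b + (2 * m + 1)%N%:R) / 2); last first.
  by rewrite natrD natrM; field.
by rewrite mulf_neq0 ?invr_neq0 // b_neq0 //; lia.
Qed.

Lemma hyp3F2_eq_hyp4F3 N i k j :
    (forall m, (m < N)%N -> a + m%:R != 0) -> (forall m, b + m%:R != 0) ->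
    (i <= N)%N -> (k <= N)%N -> (j <= N)%N -> hahn_eig k = hahn_eig (2 * j)%N ->
  hyp N [:: - i%:R; - k%:R; k%:R + 2 * a - 1] [:: b; a]
    = hyp N [:: - i%:R; i%:R + b; - j%:R; j%:R + a - 2^-1] [:: a; b / 2; (b + 1) / 2].
Proof.
move=> a_neq0 b_neq0 le_iN le_kN le_jN eig_kj.
apply: (hahn_op_eigen_uniq (N := N) (lam := hahn_eig k)
  (F := fun x => hyp N [:: - x; - k%:R; k%:R + 2 * a - 1] [:: b; a])
  (G := fun x => hyp N [:: - x; x + b; - j%:R; j%:R + a - 2^-1]
                       [:: a; b / 2; (b + 1) / 2])) => // [m lt_mN|m _|m _|].
- by rewrite mulf_neq0 ?a_neq0.
- by rewrite hahn_op_hyp3F2 // => m' lt_m'k; rewrite a_neq0 //; lia.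
- by rewrite eig_kj hahn_op_hyp4F3 // => m' lt_m'j; rewrite a_neq0 //; lia.
by rewrite /= oppr0 !hyp_cons0.
Qed.

End HahnOperator.

Lemma hahn_eig_sym (R : numFieldType) (a : R) m n :
  m%:R + n%:R = 1 - 2 * a -> hahn_eig a m = hahn_eig a n.
Proof.
rewrite /hahn_eig => mn; have -> : m%:R = 1 - 2 * a - n%:R by rewrite -mn addrK.
ring.
Qed.

Lemma exists_hahn_eig_eq (R : numFieldType) d j : (j <= d)%N ->
  exists2 k, (k <= d)%N & hahn_eig (- d%:R : R) k = hahn_eig (- d%:R) (2 * j)%N.
Proof.
move=> le_jd; have [le_2j_d | lt_d_2j] := leqP (2 * j) d; first by exists (2 * j)%N.
exists (2 * d + 1 - 2 * j)%N; first lia.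
apply: hahn_eig_sym; rewrite -natrD (_ : (_ + _)%N = (2 * d + 1)%N); last lia.
by rewrite natrD natrM; ring.
Qed.

Lemma theta_hahn_eig (R : numFieldType) d (r : R) k :
  theta d r (- r) k = hahn_eig (- d%:R) k + d%:R * (d%:R + 1).
Proof. by rewrite /theta /hahn_eig; ring. Qed.

Lemma thetabar_hahn_eig (R : numFieldType) d j :
  thetabar R d j = hahn_eig (- d%:R) (2 * j)%N + d%:R * (d%:R + 1).
Proof. by rewrite /thetabar /hahn_eig natrM; ring. Qed.

Lemma addr_nat_neq (R : realFieldType) (r : R) m n :
  -1 < r -> r < 1 -> r != 0 -> r + m%:R != n%:R.
Proof.
move=> r_gtN1 r_lt1 r_neq0; apply/eqP => r_eq.
have [le_mn | lt_nm] := leqP m n.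
  have : r = (n - m)%N%:R by rewrite natrB // -r_eq addrK.
  case: (n - m)%N => [|p] r_nat; first by rewrite r_nat mulr0n eqxx in r_neq0.
  have : 1 <= r by rewrite r_nat ler1n.
  lra.
have : r <= -1.
  rewrite (_ : r = - (m - n)%N%:R) ?lerN2 ?ler1n ?subn_gt0 //.
  by rewrite natrB ?(ltnW lt_nm) // -r_eq opprB addrK.
lra.
Qed.

Theorem lemma3p4 (R : realFieldType) (d : nat) (r s : R)
    (hr : -1 < r) (hs : -1 < s) (hr0 : r != 0) (hrs : r + s = 0)
    (u : nat -> {poly R})
    (hdeg : forall i, (i <= d)%N -> (size (u i) <= d.+1)%N)
    (hval : forall i j, (i <= d)%N -> (j <= d)%N ->
              (u i).[theta d r s j] = dualHahn3F2 d r s i j) :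
  forall i j, (i <= d)%N -> (j <= d)%N ->
    (u i).[thetabar R d j] = target4F3 d r i j.
Proof.
move=> i j le_id le_jd.
have s_eq : s = - r by apply/eqP; rewrite -addr_eq0 addrC hrs.
have r_lt1 : r < 1 by rewrite -ltrN2 -s_eq.
have [k le_kd eig_k] := exists_hahn_eig_eq R le_jd.
have -> : thetabar R d j = theta d r s k.
  by rewrite s_eq theta_hahn_eig thetabar_hahn_eig eig_k.
rewrite hval // /dualHahn3F2 /target4F3 s_eq opprK.
rewrite (_ : k%:R - r + r - 2 * d%:R - 1 = k%:R + 2 * - d%:R - 1); last ring.
rewrite (_ : i%:R - d%:R + r = i%:R + (r - d%:R)); last ring.
apply: hyp3F2_eq_hyp4F3 => // m.
  by rewrite addrC subr_eq0 eqr_nat => /ltn_eqF ->.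
by rewrite addrAC subr_eq0 addr_nat_neq.
Qed.
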